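(* Let $ABC$ be a hyperbolic triangle with sides $a=BC$, $b=CA$, $c=AB$ and angles $\alpha,\beta,\gamma$ at $A,B,C$ respectively, such that $\alpha>\pi/2$. Then $$\pi-\alpha<\beta+\gamma\cosh a.$$ *)

(* hyperbolic plane via the hyperboloid model in Minkowski R^{1,2}. *)
From Stdlib Require Import Reals.
Open Scope R_scope.

Record vec3 := V3 { v0 : R; v1 : R; v2 : R }.

Definition mink (x y : vec3) : R := - v0 x * v0 y + v1 x * v1 y + v2 x * v2 y.

Definition hpoint (x : vec3) : Prop := mink x x = -1 /\ 0 < v0 x.

Definition arcosh (t : R) : R := ln (t + sqrt (t * t - 1)).
Definition hdist (x y : vec3) : R := arcosh (- mink x y).

Definition vadd (x y : vec3) : vec3 := V3 (v0 x + v0 y) (v1 x + v1 y) (v2 x + v2 y).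
Definition vscale (k : R) (x : vec3) : vec3 := V3 (k * v0 x) (k * v1 x) (k * v2 x).

(* initial tangent vector at A of the geodesic from A towards B
   (orthogonal projection of B onto the tangent space at A) *)
Definition tangent_at (A B : vec3) : vec3 := vadd B (vscale (mink A B) A).

Definition hangle (A B C : vec3) : R :=
  let u := tangent_at A B in
  let v := tangent_at A C in
  acos (mink u v / (sqrt (mink u u) * sqrt (mink v v))).

Definition det3 (x y z : vec3) : R :=
  v0 x * (v1 y * v2 z - v2 y * v1 z)
  - v1 x * (v0 y * v2 z - v2 y * v0 z)
  + v2 x * (v0 y * v1 z - v1 y * v0 z).

(* a (nondegenerate) hyperbolic triangle: three points not on a common geodesic;
   geodesics are the intersections of the hyperboloid with planes through 0 *)
Definition htriangle (A B C : vec3) : Prop :=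
  hpoint A /\ hpoint B /\ hpoint C /\ det3 A B C <> 0.

(* In the hyperboloid model every angle of the triangle is an explicit function of the
   hyperbolic cosines of the sides, and these functions satisfy the second law of cosines
   cos α = - cos β cos γ + sin β sin γ cosh a.  With x = π - α < π/2 this reads
   cos (β + γ) - cos x = sin β sin γ (cosh a - 1) > 0.  If x <= β there is nothing to
   prove; otherwise β + γ < x < π/2, and the mean value theorem for cos on [β + γ, x]
   gives sin β (x - β - γ) <= sin β sin γ (cosh a - 1), i.e.
   x - β - γ <= sin γ (cosh a - 1) < γ (cosh a - 1). *)

From Stdlib Require Import Reals Lra Psatz.
Open Scope R_scope.

Lemma lt_of_cos_lt x u :
  0 <= x < PI / 2 -> 0 <= u < 3 * (PI / 2) -> cos x < cos u -> u < x.
Proof.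
  intros Hx Hu Hcos.
  destruct (Rlt_or_le u x) as [Hux | Hxu]; [exact Hux | exfalso].
  destruct (Rle_or_lt u PI) as [HuPI | HPIu].
  - assert (cos u <= cos x) by (apply cos_decr_1; lra). lra.
  - assert (cos u < 0) by (apply cos_lt_0; lra).
    assert (0 < cos x) by (apply cos_gt_0; lra). lra.
Qed.

Lemma cos_sub_cos_ge u x :
  0 <= u -> u <= x -> x <= PI / 2 -> sin u * (x - u) <= cos u - cos x.
Proof.
  intros Hu Hux HxPI.
  destruct (Req_dec u x) as [-> | Hne]; [lra |].
  destruct (MVT_cor2 cos (fun t => - sin t) u x ltac:(lra)
              (fun t _ => derivable_pt_lim_cos t)) as [xi [Hmvt Hxi]].
  assert (sin u <= sin xi) by (apply sin_incr_1; lra).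
  assert (sin u * (x - u) <= sin xi * (x - u)) by (apply Rmult_le_compat_r; lra).
  lra.
Qed.

Lemma supplement_lt_of_cosine_law al be ga c :
  PI / 2 < al < PI -> 0 < be < PI -> 0 < ga < PI -> 1 < c ->
  cos al = - cos be * cos ga + sin be * sin ga * c ->
  PI - al < be + ga * c.
Proof.
  intros Hal Hbe Hga Hc Hlaw.
  assert (Hgac : ga < ga * c) by nra.
  destruct (Rle_or_lt (PI - al) be) as [Hx_le | Hbe_lt]; [lra |].
  set (x := PI - al) in *; set (u := be + ga).
  assert (Hsb : 0 < sin be) by (apply sin_gt_0; lra).
  assert (Hsg : 0 < sin ga) by (apply sin_gt_0; lra).
  assert (Hgap : cos u - cos x = sin be * (sin ga * (c - 1))).
  { unfold u, x; rewrite cos_plus, Rtrigo_facts.cos_pi_minus, Hlaw; ring. }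
  assert (Hux : u < x).
  { apply lt_of_cos_lt; unfold u, x in *; try lra.
    assert (0 < sin be * (sin ga * (c - 1))) by (apply Rmult_lt_0_compat; nra).
    lra. }
  assert (Hmvt := cos_sub_cos_ge u x ltac:(unfold u; lra) ltac:(lra) ltac:(unfold x; lra)).
  assert (sin be <= sin u) by (apply sin_incr_1; unfold u, x in *; lra).
  assert (sin be * (x - u) <= sin u * (x - u)) by (apply Rmult_le_compat_r; lra).
  assert (Hdiff : x - u <= sin ga * (c - 1)) by (apply (Rmult_le_reg_l (sin be)); lra).
  assert (sin ga < ga) by (apply sin_lt_x; lra).
  assert (sin ga * (c - 1) < ga * (c - 1)) by (apply Rmult_lt_compat_r; lra).
  unfold u in Hdiff; lra.
Qed.

(* Minus the Gram determinant of three points of the hyperboloid whose pairwise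
   Minkowski products are -p, -q, -r. *)
Definition gram_disc (p q r : R) : R := 1 + 2 * p * q * r - p * p - q * q - r * r.

Lemma gram_disc_rot p q r : gram_disc q r p = gram_disc p q r.
Proof. unfold gram_disc; ring. Qed.

Lemma gt1_of_gram_disc_pos p q r : 1 <= p -> 0 < gram_disc p q r -> 1 < p.
Proof.
  intros Hp HD.
  destruct (Rle_lt_or_eq_dec 1 p Hp) as [Hlt | <-]; [exact Hlt | exfalso].
  assert (gram_disc 1 q r = - (q - r)²) by (unfold gram_disc, Rsqr; ring).
  pose proof (Rle_0_sqr (q - r)). lra.
Qed.

(* The angle opposite to the side of hyperbolic cosine [p], between the sides of
   hyperbolic cosines [q] and [r] (first law of cosines). *)
Definition hyp_angle (p q r : R) : R :=
  acos ((q * r - p) / (sqrt (q * q - 1) * sqrt (r * r - 1))).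

Section HypAngle.

Variables p q r : R.
Hypotheses (Hq : 1 < q) (Hr : 1 < r) (HD : 0 < gram_disc p q r).

Let Hq2 : 0 < q * q - 1. Proof. nra. Qed.
Let Hr2 : 0 < r * r - 1. Proof. nra. Qed.

Let cos_arg := (q * r - p) / (sqrt (q * q - 1) * sqrt (r * r - 1)).

Lemma one_sub_sqr_cos_arg :
  1 - cos_arg² = gram_disc p q r / ((q * q - 1) * (r * r - 1)).
Proof.
  assert (Hsq := sqrt_sqrt (q * q - 1) ltac:(lra)).
  assert (Hsr := sqrt_sqrt (r * r - 1) ltac:(lra)).
  assert (0 < sqrt (q * q - 1)) by (apply sqrt_lt_R0; lra).
  assert (0 < sqrt (r * r - 1)) by (apply sqrt_lt_R0; lra).
  unfold cos_arg, Rsqr.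
  replace ((q * r - p) / (sqrt (q * q - 1) * sqrt (r * r - 1))
           * ((q * r - p) / (sqrt (q * q - 1) * sqrt (r * r - 1))))
    with ((q * r - p) * (q * r - p)
          / ((sqrt (q * q - 1) * sqrt (q * q - 1)) * (sqrt (r * r - 1) * sqrt (r * r - 1))))
    by (field; lra).
  rewrite Hsq, Hsr. unfold gram_disc. field. split; lra.
Qed.

Lemma cos_arg_bound : -1 < cos_arg < 1.
Proof.
  assert (0 < gram_disc p q r / ((q * q - 1) * (r * r - 1)))
    by (apply Rdiv_lt_0_compat, Rmult_lt_0_compat; assumption).
  rewrite <- one_sub_sqr_cos_arg in *. unfold Rsqr in *. nra.
Qed.

Lemma hyp_angle_bound : 0 < hyp_angle p q r < PI.
Proof. exact (acos_bound_lt _ cos_arg_bound). Qed.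

Lemma cos_hyp_angle :
  cos (hyp_angle p q r) = (q * r - p) / (sqrt (q * q - 1) * sqrt (r * r - 1)).
Proof. unfold hyp_angle; fold cos_arg; apply cos_acos; pose proof cos_arg_bound; lra. Qed.

Lemma sin_hyp_angle :
  sin (hyp_angle p q r) = sqrt (gram_disc p q r) / (sqrt (q * q - 1) * sqrt (r * r - 1)).
Proof.
  unfold hyp_angle; fold cos_arg.
  rewrite sin_acos by (pose proof cos_arg_bound; lra).
  rewrite one_sub_sqr_cos_arg, sqrt_div_alt, sqrt_mult_alt by (try apply Rmult_lt_0_compat; lra).
  reflexivity.
Qed.

End HypAngle.

Lemma hyp_second_cosine_law p q r :
  1 < p -> 1 < q -> 1 < r -> 0 < gram_disc p q r ->
  cos (hyp_angle p q r) =
    - cos (hyp_angle r p q) * cos (hyp_angle q r p)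
    + sin (hyp_angle r p q) * sin (hyp_angle q r p) * p.
Proof.
  intros Hp Hq Hr HD.
  assert (HD' : 0 < gram_disc r p q) by (rewrite <- gram_disc_rot; exact HD).
  assert (HD'' : 0 < gram_disc q r p) by (rewrite gram_disc_rot; exact HD).
  rewrite !cos_hyp_angle, !sin_hyp_angle by assumption.
  rewrite (gram_disc_rot p q r), <- (gram_disc_rot r p q).
  set (sp := sqrt (p * p - 1)); set (sq := sqrt (q * q - 1)); set (sr := sqrt (r * r - 1)).
  set (sD := sqrt (gram_disc p q r)).
  assert (Hsp : sp * sp = p * p - 1) by (apply sqrt_sqrt; nra).
  assert (HsD : sD * sD = gram_disc p q r) by (apply sqrt_sqrt; lra).
  assert (0 < sp) by (apply sqrt_lt_R0; nra).
  assert (0 < sq) by (apply sqrt_lt_R0; nra).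
  assert (0 < sr) by (apply sqrt_lt_R0; nra).
  replace (- ((p * q - r) / (sp * sq)) * ((r * p - q) / (sr * sp))
           + sD / (sp * sq) * (sD / (sr * sp)) * p)
    with ((- (p * q - r) * (r * p - q) + (sD * sD) * p) / ((sp * sp) * sq * sr))
    by (field; lra).
  rewrite HsD, Hsp. unfold gram_disc. field. repeat split; nra.
Qed.

Lemma mink_sym x y : mink x y = mink y x.
Proof. unfold mink; ring. Qed.

Lemma mink_tangent_at P Q R : mink P P = -1 ->
  mink (tangent_at P Q) (tangent_at P R) = mink Q R + mink P Q * mink P R.
Proof.
  intros HP.
  replace (mink Q R + mink P Q * mink P R)
    with (mink Q R + mink P Q * mink P R * (2 + mink P P)) by (rewrite HP; ring).
  destruct P, Q, R; unfold tangent_at, vadd, vscale, mink; simpl; ring.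
Qed.

Lemma one_le_neg_mink P Q : hpoint P -> hpoint Q -> 1 <= - mink P Q.
Proof.
  destruct P as [p0 p1 p2], Q as [q0 q1 q2]; unfold hpoint, mink; simpl.
  intros [HP Hp0] [HQ Hq0].
  set (s := p1 * q1 + p2 * q2).
  assert (Hlagrange : (p0 * q0) * (p0 * q0) - (1 + s) * (1 + s) =
    (p1 - q1) * (p1 - q1) + (p2 - q2) * (p2 - q2) + (p1 * q2 - p2 * q1) * (p1 * q2 - p2 * q1)).
  { replace ((p0 * q0) * (p0 * q0)) with ((p0 * p0) * (q0 * q0)) by ring.
    replace (p0 * p0) with (1 + p1 * p1 + p2 * p2) by lra.
    replace (q0 * q0) with (1 + q1 * q1 + q2 * q2) by lra.
    unfold s; ring. }
  assert (Hsq : (1 + s) * (1 + s) <= (p0 * q0) * (p0 * q0)).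
  { pose proof (Rle_0_sqr (p1 - q1)); pose proof (Rle_0_sqr (p2 - q2));
      pose proof (Rle_0_sqr (p1 * q2 - p2 * q1)); unfold Rsqr in *; lra. }
  assert (0 < p0 * q0) by nra.
  assert (1 + s <= p0 * q0) by nra.
  unfold s in *; lra.
Qed.

Lemma cosh_arcosh t : 1 <= t -> cosh (arcosh t) = t.
Proof.
  intros Ht. unfold arcosh, cosh.
  assert (Hs := sqrt_sqrt (t * t - 1) ltac:(nra)).
  assert (Hs0 := sqrt_pos (t * t - 1)).
  rewrite exp_Ropp, exp_ln by lra.
  replace (/ (t + sqrt (t * t - 1))) with (t - sqrt (t * t - 1)).
  - lra.
  - field_simplify_eq; [nra | lra].
Qed.

Lemma hangle_hyp_angle P Q R : hpoint P -> hpoint Q -> hpoint R ->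
  hangle P Q R = hyp_angle (- mink Q R) (- mink P Q) (- mink P R).
Proof.
  intros [HP _] [HQ _] [HR _]. unfold hangle, hyp_angle.
  rewrite !mink_tangent_at, HQ, HR by exact HP.
  f_equal. f_equal; [ring |]. f_equal; f_equal; ring.
Qed.

Lemma gram_disc_det3 A B C : hpoint A -> hpoint B -> hpoint C ->
  gram_disc (- mink B C) (- mink A B) (- mink C A) = det3 A B C * det3 A B C.
Proof.
  intros [HA _] [HB _] [HC _].
  (* minus the Gram determinant of A, B, C, which is det3² as the form has determinant -1 *)
  transitivity (- (mink A A * mink B B * mink C C) - 2 * mink B C * mink C A * mink A B
                + mink A A * mink B C * mink B C + mink B B * mink C A * mink C A
                + mink C C * mink A B * mink A B).
  - rewrite HA, HB, HC. unfold gram_disc. ring.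
  - destruct A, B, C; unfold mink, det3; simpl; ring.
Qed.

Theorem lemma5p2p5 (A B C : vec3) :
  htriangle A B C ->
  hangle A B C > PI / 2 ->
  PI - hangle A B C < hangle B C A + hangle C A B * cosh (hdist B C).
Proof.
  intros [hA [hB [hC Hdet]]] Hobtuse.
  unfold hdist; rewrite cosh_arcosh by exact (one_le_neg_mink B C hB hC).
  rewrite (hangle_hyp_angle A B C), (hangle_hyp_angle B C A), (hangle_hyp_angle C A B)
    in * by assumption.
  rewrite (mink_sym A C), (mink_sym B A), (mink_sym C B) in *.
  assert (HD : 0 < gram_disc (- mink B C) (- mink A B) (- mink C A)).
  { rewrite gram_disc_det3 by assumption. exact (Rsqr_pos_lt _ Hdet). }
  assert (HX := one_le_neg_mink B C hB hC).
  assert (HY := one_le_neg_mink C A hC hA).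
  assert (HZ := one_le_neg_mink A B hA hB).
  set (X := - mink B C) in *; set (Y := - mink C A) in *; set (Z := - mink A B) in *.
  clearbody X Y Z.
  assert (HDb : 0 < gram_disc Y X Z) by (rewrite <- gram_disc_rot; exact HD).
  assert (HDc : 0 < gram_disc Z Y X) by (rewrite gram_disc_rot; exact HD).
  assert (HX1 := gt1_of_gram_disc_pos X Z Y HX HD).
  assert (HY1 := gt1_of_gram_disc_pos Y X Z HY HDb).
  assert (HZ1 := gt1_of_gram_disc_pos Z Y X HZ HDc).
  apply supplement_lt_of_cosine_law.
  - split; [lra | apply hyp_angle_bound; assumption].
  - apply hyp_angle_bound; assumption.
  - apply hyp_angle_bound; assumption.
  - exact HX1.
  - apply hyp_second_cosine_law; assumption.
Qed.
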